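(* For $n_1=2k_1>0$ and $n_2=2k_2+1>0$, $$s_{n_1+n_2}\bigl[\widetilde L(n_1,n_2)\bigr]=\sum_{j=1}^{n_1}(-1)^j\binom{n_1+n_2}{j}=-\binom{n_1+n_2}{1}+\binom{n_1+n_2}{2}-\cdots-\binom{n_1+n_2}{n_1-1}+\binom{n_1+n_2}{n_1}.$$
   Context: Let $\eta$ be the tautological line bundle over $\mathbb CP^{n_1}$, let $p\colon L(n_1,n_2)=\mathbb CP(\eta\oplus\underline{\mathbb C}^{n_2})\to\mathbb CP^{n_1}$ be the projectivisation and $\gamma$ its tautological line bundle. For $n_1=2k_1$, $n_2=2k_2+1$, $\widetilde L(n_1,n_2)$ denotes the manifold $L(n_1,n_2)$ with the stably complex structure defined by the real bundle isomorphism $$\mathcal TL(n_1,n_2)\oplus\underline{\mathbb R}^4\cong (p^*\bar\eta\oplus p^*\eta)^{\oplus k_1}\oplus p^*\bar\eta\oplus(\bar\gamma\otimes p^*\eta)\oplus(\bar\gamma\oplus\gamma)^{\oplus k_2}\oplus\gamma .$$ Its cohomology ring is $\mathbb Z[u,v]/(u^{n_1+1},v^{n_2+1}-uv^{n_2})$ with $u=c_1(p^*\bar\eta)$, $v=c_1(\bar\gamma)$, $\langle u^{n_1}v^{n_2},[\widetilde L]\rangle=1$. For a stably complex manifold of real dimension $2n$, $s_n[M]=\langle s_n(\mathcal TM),[M]\rangle$ where $s_n$ is the Chern-class polynomial corresponding to the power sum $t_1^n+\cdots+t_n^n$. *)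

From HB Require Import structures.
From mathcomp Require Import all_boot all_order all_algebra.
Set Implicit Arguments. Unset Strict Implicit. Unset Printing Implicit Defensive.
Import Order.TTheory GRing.Theory Num.Theory.
Local Open Scope ring_scope.

(* Z[u,v] represented as Z[u][v] : polynomials in v with coefficients in Z[u]. *)
Definition Zuv := {poly {poly int}}.
Definition uu : Zuv := ('X : {poly int})%:P.   (* u = c1(p^* bar eta) *)
Definition vv : Zuv := 'X.                     (* v = c1(bar gamma)    *)

(* H^*(L) = Z[u,v]/(u^(n1+1), v^(n2+1) - u v^n2)
          = (Z[u]/(u^(n1+1)))[v] / (v^n2 (v - u)).
   Normal form: remainder modulo the monic (in v) polynomial v^(n2+1) - u v^n2,
   then coefficients taken modulo u^(n1+1).  The evaluation on the fundamental
   class, <., [L]>, is the coefficient of u^n1 v^n2 in this normal form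
   (normalised by <u^n1 v^n2,[L]> = 1). *)
Definition L_rel (n2 : nat) : Zuv := vv ^+ n2.+1 - uu * vv ^+ n2.
Definition L_normal (n1 n2 : nat) (x : Zuv) : Zuv :=
  map_poly (fun c : {poly int} => Pdiv.Ring.rmodp c ('X ^+ n1.+1))
           (Pdiv.Ring.rmodp x (L_rel n2)).
Definition L_eval (n1 n2 : nat) (x : Zuv) : int :=
  ((L_normal n1 n2 x)`_n2)`_n1.

(* First Chern classes of the complex line bundles in the splitting
   T L (+) R^4 = (p^*bar eta (+) p^*eta)^k1 (+) p^*bar eta (+) (bar gamma (x) p^* eta)
                 (+) (bar gamma (+) gamma)^k2 (+) gamma.
   c1(p^* eta) = -u, c1(gamma) = -v, c1(bar gamma (x) p^* eta) = v - u. *)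
Definition Ltilde_chern_roots (k1 k2 : nat) : seq Zuv :=
  flatten (nseq k1 [:: uu; - uu]) ++ [:: uu; vv - uu]
  ++ flatten (nseq k2 [:: vv; - vv]) ++ [:: - vv].

(* s_n of a sum of line bundles (plus trivial bundles) is the power sum of
   their first Chern classes. *)
Definition s_class (n : nat) (roots : seq Zuv) : Zuv :=
  \sum_(x <- roots) x ^+ n.

Definition s_number_Ltilde (k1 k2 : nat) : int :=
  L_eval k1.*2 k2.*2.+1
    (s_class (k1.*2 + k2.*2.+1) (Ltilde_chern_roots k1 k2)).

From HB Require Import structures.
From mathcomp Require Import all_boot all_order all_algebra.
From mathcomp Require Import ring zify.
Import Order.TTheory GRing.Theory Num.Theory.
Local Open Scope ring_scope.

(* 1. Evaluation on the fundamental class only reads the coefficient of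
      u^n1 v^n2, and reduction modulo u^(n1+1) does not affect it; hence
      <x,[L]> is the additive map [top_coef] : reduce modulo the monic (in v)
      relation v^n2 (v - u), then take that coefficient.
   2. On monomials, v^(n2+k+1) = u v^(n2+k) modulo the relation, so
      <u^a v^b,[L]> = 1 iff b >= n2 and a + b = n1 + n2, and 0 otherwise.
   3. For N = n1 + n2 odd the Chern roots (u,-u), (v,-v) cancel in pairs,
      leaving s_N = u^N + (v - u)^N - v^N.  Evaluating with step 2,
      <u^N> = 0, <v^N> = 1, and the binomial expansion of (v - u)^N
      contributes sum_(0 <= j <= n1) (-1)^j C(N,j); the term j = 0
      cancels against -<v^N>, which is the formula of the theorem. *)

Lemma rmodp_Xn_coef (R : nzRingType) (p : {poly R}) (n : nat) :
  (Pdiv.Ring.rmodp p 'X^(n.+1))`_n = p`_n.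
Proof.
rewrite {2}(Pdiv.RingMonic.rdivp_eq (monicXn R n.+1) p).
by rewrite coefD coefMXn ltnSn add0r.
Qed.

Lemma L_rel_factor (n2 : nat) : L_rel n2 = vv ^+ n2 * (vv - uu).
Proof. by rewrite /L_rel mulrBr -exprSr mulrC. Qed.

Lemma L_rel_monic (n2 : nat) : L_rel n2 \is monic.
Proof. by rewrite L_rel_factor monicMl ?monicXn // /uu /vv monicXsubC. Qed.

Lemma size_L_rel (n2 : nat) : size (L_rel n2) = n2.+2.
Proof.
rewrite L_rel_factor size_Mmonic ?monicXsubC ?monic_neq0 ?monicXn //.
by rewrite size_polyXn size_XsubC addn2.
Qed.

Definition top_coef (n1 n2 : nat) (x : Zuv) : int :=
  ((Pdiv.Ring.rmodp x (L_rel n2))`_n2)`_n1.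

Lemma top_coef_is_zmod_morphism (n1 n2 : nat) :
  {morph top_coef n1 n2 : x y / x - y}.
Proof.
move=> x y; rewrite /top_coef (Pdiv.RingMonic.rmodpB (L_rel_monic n2)).
by rewrite !coefB.
Qed.

HB.instance Definition _ (n1 n2 : nat) := GRing.isZmodMorphism.Build Zuv int
  (top_coef n1 n2) (@top_coef_is_zmod_morphism n1 n2).

Lemma top_coef_multiple_rel (n1 n2 : nat) (q : Zuv) :
  top_coef n1 n2 (q * L_rel n2) = 0.
Proof.
by rewrite /top_coef (Pdiv.RingMonic.rmodp_mull (L_rel_monic n2)) !coef0.
Qed.

Lemma L_eval_top_coef (n1 n2 : nat) (x : Zuv) :
  L_eval n1 n2 x = top_coef n1 n2 x.
Proof.
by rewrite /L_eval /L_normal coef_map_id0 ?rmodp_Xn_coef // Pdiv.Ring.rmod0p.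
Qed.

Section Monomials.
Variables n1 n2 : nat.
Local Notation ev := (top_coef n1 n2).

Lemma top_coef_sign (i : nat) (x : Zuv) : ev ((-1) ^+ i * x) = (-1) ^+ i * ev x.
Proof.
rewrite -(signr_odd Zuv) -(signr_odd int).
by case: (odd i); rewrite ?expr0 ?expr1 ?mul1r ?mulN1r ?raddfN.
Qed.

(* Monomials of v-degree at most n2 are already reduced. *)
Lemma top_coef_reduced (a b : nat) : (b <= n2)%N ->
  ev (uu ^+ a * vv ^+ b) = ((a == n1) && (b == n2))%:R.
Proof.
move=> le_b_n2; rewrite /top_coef /uu /vv -rmorphXn /= Pdiv.Ring.rmodp_small.
  rewrite coefCM coefXn [(b == n2)]eq_sym.
  by case: (n2 == b); rewrite ?mulr1 ?mulr0 ?coef0 ?coefXn ?andbT ?andbF 1?eq_sym.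
by rewrite size_Cmul ?expf_neq0 ?polyX_eq0 // size_polyXn size_L_rel ltnS.
Qed.

Lemma top_coef_shift (a k : nat) :
  ev (uu ^+ a * vv ^+ (n2 + k.+1)) = ev (uu ^+ a.+1 * vv ^+ (n2 + k)).
Proof.
have -> : uu ^+ a * vv ^+ (n2 + k.+1) =
    (uu ^+ a * vv ^+ k) * L_rel n2 + uu ^+ a.+1 * vv ^+ (n2 + k).
  by rewrite /L_rel !exprD !exprS; ring.
by rewrite raddfD /= top_coef_multiple_rel add0r.
Qed.

Lemma top_coef_monomial (a b : nat) :
  ev (uu ^+ a * vv ^+ b) = ((n2 <= b)%N && (a + b == n1 + n2)%N)%:R.
Proof.
have [le_n2_b | lt_b_n2] := leqP n2 b; last first.
  by rewrite top_coef_reduced ?(ltnW lt_b_n2) // (ltn_eqF lt_b_n2) andbF.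
rewrite -(subnKC le_n2_b); elim: (b - n2)%N a => [|k IHk] a.
  by rewrite addn0 top_coef_reduced // eqxx andbT eqn_add2r.
by rewrite top_coef_shift IHk addSnnS -addnS.
Qed.

(* The binomial expansion of (v - u)^(n1+n2) evaluates to the alternating
   partial sum of binomial coefficients up to j = n1: the monomial
   u^j v^(N-j) survives exactly when N - j >= n2, i.e. j <= n1. *)
Lemma top_coef_binomial :
  ev ((vv - uu) ^+ (n1 + n2)) =
    \sum_(0 <= j < n1.+1) (-1) ^+ j * ('C(n1 + n2, j))%:Z.
Proof.
set N := (n1 + n2)%N.
rewrite exprBn raddf_sum.
rewrite -(big_mkord xpredT (fun i =>
  ev ((-1) ^+ i * vv ^+ (N - i) * uu ^+ i *+ 'C(N, i)))).
rewrite (big_cat_nat (n := n1.+1)) //= ?ltnS ?leq_addr //.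
rewrite [X in _ + X]big1_seq ?addr0 => [|i /andP [_]]; last first.
  rewrite mem_index_iota => /andP [lt_n1_i lt_i_N].
  rewrite raddfMn /= -mulrA top_coef_sign [vv ^+ _ * _]mulrC top_coef_monomial.
  rewrite (_ : n2 <= N - i = false)%N ?mulr0 ?mul0rn //.
  by apply/negbTE; rewrite -ltnNge /N; lia.
apply: eq_big_nat => i /andP [_ le_i_n1].
rewrite raddfMn /= -mulrA top_coef_sign [vv ^+ _ * _]mulrC top_coef_monomial.
rewrite (_ : n2 <= N - i)%N ?subnKC ?eqxx ?mulr1 ?pmulrn //; rewrite /N; lia.
Qed.

End Monomials.

Lemma power_sum_opposite_pairs (R : pzRingType) (N k : nat) (x : R) : odd N ->
  \sum_(y <- flatten (nseq k [:: x; - x])) y ^+ N = 0.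
Proof.
move=> odd_N; elim: k => [|k IHk] /=; first by rewrite big_nil.
by rewrite !big_cons IHk exprNn -signr_odd odd_N mulN1r !addr0 subrr.
Qed.

Lemma s_class_Ltilde (k1 k2 N : nat) : odd N ->
  s_class N (Ltilde_chern_roots k1 k2) = uu ^+ N + (vv - uu) ^+ N - vv ^+ N.
Proof.
move=> odd_N; rewrite /s_class /Ltilde_chern_roots !big_cat /=.
rewrite !power_sum_opposite_pairs // !big_cons !big_nil.
by rewrite exprNn -signr_odd odd_N mulN1r; ring.
Qed.

Theorem lemma10p1 (k1 k2 n1 n2 : nat) :
  n1 = k1.*2 -> n2 = k2.*2.+1 -> (0 < n1)%N ->
  s_number_Ltilde k1 k2 =
    \sum_(1 <= j < n1.+1) (-1) ^+ j * ('C(n1 + n2, j))%:Z.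
Proof.
move=> def_n1 def_n2 _.
have odd_N : odd (n1 + n2) by rewrite def_n1 def_n2 oddD odd_double /= odd_double.
rewrite /s_number_Ltilde -def_n1 -def_n2 L_eval_top_coef s_class_Ltilde //.
have top_u : top_coef n1 n2 (uu ^+ (n1 + n2)) = 0.
  by rewrite -[uu ^+ _]mulr1 -[1](expr0 vv) top_coef_monomial {1}def_n2.
have top_v : top_coef n1 n2 (vv ^+ (n1 + n2)) = 1.
  by rewrite -[vv ^+ _]mul1r -[1](expr0 uu) top_coef_monomial leq_addl eqxx.
rewrite raddfB raddfD /= top_u top_v top_coef_binomial add0r.
by rewrite [X in X - 1]big_ltn // expr0 mul1r bin0 addrAC subrr add0r.
Qed.
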